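(* Let $n\ge 2$, $m\in\{1,\dots,n-1\}$, $\sigma\in(0,1)$, and let $\Sigma$ be an $n\times n$ symmetric positive-definite matrix. Let $G_o=\mathcal{N}(0,\Sigma)$ and $G^{(1)}_{\mathrm{SSL}}=\mathcal{N}(0,\sigma\Sigma)$. For $\alpha>\beta>0$ satisfying $\alpha^m\beta^{n-m}=\sigma^n$, let $D=\mathrm{diag}(\alpha,\dots,\alpha,\beta,\dots,\beta)$ ($m$ entries $\alpha$, $n-m$ entries $\beta$) and $G_{\mathrm{SL}}=\mathcal{N}(0,\Sigma^{1/2}D\Sigma^{1/2})$. Then $$D_{\mathrm{KL}}(G_o\|G_{\mathrm{SL}})\ge D_{\mathrm{KL}}(G_o\|G^{(1)}_{\mathrm{SSL}}),$$ with equality iff $\alpha=\beta=\sigma$. Moreover, as $\beta\to 0$ with $\alpha$ determined by $\alpha^m\beta^{n-m}=\sigma^n$, $$\frac{D_{\mathrm{KL}}(G_o\|G_{\mathrm{SL}})}{D_{\mathrm{KL}}(G_o\|G^{(1)}_{\mathrm{SSL}})}\to\infty.$$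
   Context: $D_{\mathrm{KL}}$ denotes Kullback–Leibler divergence; $\Sigma^{1/2}$ is the symmetric positive-definite square root of $\Sigma$. The constraint $\alpha^m\beta^{n-m}=\sigma^n$ is equivalent to $\det(\Sigma^{1/2}D\Sigma^{1/2})=\det(\sigma\Sigma)$ (equal covariance-ellipsoid volume). *)

From HB Require Import structures.
From mathcomp Require Import all_boot all_order all_algebra.
From mathcomp Require Import all_classical all_reals all_analysis.
Set Implicit Arguments. Unset Strict Implicit. Unset Printing Implicit Defensive.
Import Order.TTheory GRing.Theory Num.Theory.
Local Open Scope ring_scope.

Definition spd (R : realType) (n : nat) (A : 'M[R]_n) : Prop :=
  A^T = A /\ forall v : 'rV[R]_n, v != 0 -> 0 < (v *m A *m v^T) 0 0.

(* Kullback-Leibler divergence D_KL(N(0,S0) || N(0,S1)) between two centred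
   nondegenerate Gaussians on R^n, given by its standard closed form
   1/2 [ tr(S1^{-1} S0) - n + ln(det S1 / det S0) ]. *)
Definition gaussKL (R : realType) (n : nat) (S0 S1 : 'M[R]_n) : R :=
  (\tr (invmx S1 *m S0) - n%:R + ln (\det S1 / \det S0)) / 2.

Definition diagAB (R : realType) (n m : nat) (alpha beta : R) : 'M[R]_n :=
  diag_mx (\row_(i < n) (if (i < m)%N then alpha else beta)).

(* alpha as a function of beta, from alpha^m beta^(n-m) = sigma^n. *)
Definition alpha_of (R : realType) (n m : nat) (sigma beta : R) : R :=
  powR (sigma ^+ n / beta ^+ (n - m)) (m%:R)^-1.

From HB Require Import structures.
From mathcomp Require Import all_boot all_order all_algebra.
From mathcomp Require Import all_classical all_reals all_analysis.
From mathcomp Require Import ring lra.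
Set Implicit Arguments.
Unset Strict Implicit.
Unset Printing Implicit Defensive.
Import Order.TTheory GRing.Theory Num.Theory numFieldNormedType.Exports.
Local Open Scope classical_set_scope.
Local Open Scope ring_scope.

(* Conjugating both covariances by Sigma^(1/2) turns D_KL(G_o || G_SL) into
   (m/alpha + (n-m)/beta - n + ln (alpha^m beta^(n-m))) / 2 and
   D_KL(G_o || G_SSL) into (n/sigma - n + ln (sigma^n)) / 2.  Under the volume
   constraint the logarithms coincide, and the comparison becomes the strict
   AM-GM inequality for the n numbers 1/alpha, ..., 1/beta, whose geometric
   mean is 1/sigma.  As beta -> 0 the term (n-m)/beta alone diverges, while
   D_KL(G_o || G_SSL) is a positive constant since ln sigma > 1 - 1/sigma. *)

Lemma sumr_ite_lt (V : nmodType) (n m : nat) (a b : V) : (m <= n)%N ->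
  \sum_(i < n) (if (i < m)%N then a else b) = a *+ m + b *+ (n - m).
Proof.
move=> le_mn; rewrite -(big_mkord xpredT (fun i => if (i < m)%N then a else b)).
rewrite (big_cat_nat (n := m) (leq0n m) le_mn) /=.
rewrite (@eq_big_nat _ _ _ 0 m _ (fun=> a)); last by move=> i /andP[_ ->].
rewrite (@eq_big_nat _ _ _ m n _ (fun=> b)); last first.
  by move=> i /andP[]; rewrite leqNgt => /negbTE ->.
by rewrite !sumr_const_nat subn0.
Qed.

Lemma prodr_ite_lt (R : comPzSemiRingType) (n m : nat) (a b : R) : (m <= n)%N ->
  \prod_(i < n) (if (i < m)%N then a else b) = a ^+ m * b ^+ (n - m).
Proof.
move=> le_mn; rewrite -(big_mkord xpredT (fun i => if (i < m)%N then a else b)).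
rewrite (big_cat_nat (n := m) (leq0n m) le_mn) /=.
rewrite (@eq_big_nat _ _ _ 0 m _ (fun=> a)); last by move=> i /andP[_ ->].
rewrite (@eq_big_nat _ _ _ m n _ (fun=> b)); last first.
  by move=> i /andP[]; rewrite leqNgt => /negbTE ->.
by rewrite !prodr_const_nat subn0.
Qed.

Lemma ltr_AGM2 (R : realFieldType) (m k : nat) (x y : R) :
  (0 < m)%N -> (0 < k)%N -> 0 <= x -> 0 <= y -> x != y ->
  x ^+ m * y ^+ k < ((x *+ m + y *+ k) / (m + k)%:R) ^+ (m + k).
Proof.
move=> m_gt0 k_gt0 x_ge0 y_ge0 neq_xy.
pose E (i : 'I_(m + k)) := if (i < m)%N then x else y.
have E_ge0 : {in predT, forall i, 0 <= E i} by move=> i _; rewrite /E; case: ifP.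
have lt_m_mk : (m < m + k)%N by rewrite -{1}(addn0 m) ltn_add2l.
have := leif_AGM E_ge0; rewrite card_ord sumr_ite_lt ?prodr_ite_lt ?leq_addr //.
rewrite addKn => /lt_leif ->; apply/negP.
move=> /forallP/(_ (Ordinal (ltn_addr k m_gt0)))/implyP/(_ isT).
move=> /forallP/(_ (Ordinal lt_m_mk))/implyP/(_ isT).
by rewrite /E /= m_gt0 ltnn (negPf neq_xy).
Qed.

Lemma ltr_AGM2_inv (R : realFieldType) (n m : nat) (a b s : R) :
  (0 < m < n)%N -> 0 < a -> 0 < b -> a != b -> 0 < s ->
  a ^+ m * b ^+ (n - m) = s ^+ n -> s^-1 *+ n < a^-1 *+ m + b^-1 *+ (n - m).
Proof.
move=> /andP[m_gt0 lt_mn] a_gt0 b_gt0 neq_ab s_gt0 constraint.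
have k_gt0 : (0 < n - m)%N by rewrite subn_gt0.
have n_eq : (m + (n - m))%N = n by rewrite subnKC // ltnW.
have a'_ge0 : 0 <= a^-1 by rewrite invr_ge0 ltW.
have b'_ge0 : 0 <= b^-1 by rewrite invr_ge0 ltW.
have := ltr_AGM2 m_gt0 k_gt0 a'_ge0 b'_ge0.
rewrite (inj_eq (@invr_inj _)) neq_ab n_eq !exprVn -invfM constraint -exprVn.
move=> /(_ isT); rewrite ltr_pXn2r ?(ltn_trans m_gt0) ?nnegrE ?invr_ge0 ?(ltW s_gt0) //.
  by rewrite ltr_pdivlMr ?ltr0n ?(ltn_trans m_gt0) // mulr_natr.
by rewrite divr_ge0 ?addr_ge0 ?mulrn_wge0.
Qed.

Lemma ln_gt_1BV (R : realType) (x : R) : 0 < x -> x != 1 -> 1 - x^-1 < ln x.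
Proof.
move=> x_gt0 x_neq1.
have nz_lnx : - ln x != 0 by rewrite oppr_eq0 ln_eq0.
by have := expR_gt1Dx nz_lnx; rewrite expRN lnK // ltrBlDl ltrBlDr addrC.
Qed.

Lemma alpha_ofP (R : realType) (n m : nat) (s b : R) :
  (0 < m)%N -> 0 < s -> 0 < b ->
  0 < alpha_of n m s b /\ alpha_of n m s b ^+ m * b ^+ (n - m) = s ^+ n.
Proof.
move=> m_gt0 s_gt0 b_gt0.
have x_gt0 : 0 < s ^+ n / b ^+ (n - m) by rewrite divr_gt0 ?exprn_gt0.
split; first exact: powR_gt0.
rewrite /alpha_of -powR_mulrn ?powR_ge0 // -powRrM mulVf ?pnatr_eq0 -?lt0n //.
by rewrite powRr1 ?ltW // divfK // expf_neq0 // gt_eqF.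
Qed.

Lemma cvgy_addr (T : Type) (F : set_system T) (FF : Filter F)
    (R : realFieldType) (f : T -> R) (c : R) :
  f @ F --> +oo -> f x + c @[x --> F] --> +oo.
Proof.
move=> /cvgryPge f_cvgy; apply/cvgryPge => A.
by apply: filterS (f_cvgy (A - c)) => x; rewrite lerBlDr.
Qed.

Lemma invr_cvgy0p (R : realFieldType) : x^-1 @[x --> (0 : R)^'+] --> +oo.
Proof. by apply/cvgrVy; [exact: nbhs_right_gt | exact: cvg_within]. Qed.

Section MatrixInverse.
Variables (F : comUnitRingType) (n : nat).
Implicit Types (A B : 'M[F]_n) (d : 'rV[F]_n).

Lemma mulmx1_invmx A B : A *m B = 1%:M -> invmx A = B.
Proof.
by move=> AB; have [uA _] := mulmx1_unit AB; rewrite -[RHS](mulKmx uA) AB mulmx1.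
Qed.

Lemma invmxM A B : A \in unitmx -> B \in unitmx ->
  invmx (A *m B) = invmx B *m invmx A.
Proof.
move=> uA uB; apply: mulmx1_invmx.
by rewrite -mulmxA (mulmxA B) mulmxV // mul1mx mulmxV.
Qed.

Lemma invmx_diag d : (forall i, d 0 i \is a GRing.unit) ->
  invmx (diag_mx d) = diag_mx (\row_i (d 0 i)^-1).
Proof.
move=> ud; apply: mulmx1_invmx; apply/matrixP => i j.
by rewrite mul_diag_mx !mxE; case: eqP => _; rewrite ?mulr0 ?mulr1 ?mulrV.
Qed.

End MatrixInverse.

Section GaussianKL.
Variables (R : realType) (n : nat).
Implicit Types (P Q S T Sh : 'M[R]_n) (d : 'rV[R]_n) (a b s : R) (m : nat).

Lemma spd_unitmx S : spd S -> S \in unitmx.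
Proof.
move=> [_ pos]; rewrite -row_free_unit -kermx_eq0.
apply/eqP/row_matrixP => i; rewrite row0.
apply/eqP/negPn/negP => /pos.
by rewrite -row_mul mulmx_ker row0 mul0mx mxE ltxx.
Qed.

Lemma gaussKL_mulmx P Q T S :
    P \in unitmx -> Q \in unitmx -> S \in unitmx ->
  gaussKL (P *m T *m Q) (P *m S *m Q) = gaussKL T S.
Proof.
move=> uP uQ uS; rewrite /gaussKL !invmxM ?unitmx_mul ?uP ?uS //.
have -> : invmx Q *m (invmx S *m invmx P) *m (P *m T *m Q)
          = invmx Q *m (invmx S *m T *m Q).
  by rewrite !mulmxA mulmxKV.
rewrite mxtrace_mulC mulmxK // !det_mulmx.
have dP : \det P != 0 by rewrite -unitfE -unitmxE.
have dQ : \det Q != 0 by rewrite -unitfE -unitmxE.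
congr ((_ + ln _) / 2).
(* A singular [T] makes both ratios vanish, as [x / 0 = 0]. *)
have [->|dT] := eqVneq (\det T) 0; first by rewrite mulr0 mul0r !invr0 !mulr0.
by field; rewrite dT dQ dP.
Qed.

Lemma gaussKL1_diag d : (forall i, d 0 i != 0) ->
  gaussKL 1%:M (diag_mx d) =
  (\sum_i (d 0 i)^-1 - n%:R + ln (\prod_i d 0 i)) / 2.
Proof.
move=> nz_d; rewrite /gaussKL mulmx1 invmx_diag => [|i]; last by rewrite unitfE.
rewrite mxtrace_diag det_diag det1 divr1.
by congr ((_ - _ + _) / 2); apply: eq_bigr => i _; rewrite mxE.
Qed.

Lemma gaussKL_scale S s : S \in unitmx -> s != 0 ->
  gaussKL S (s *: S) = (s^-1 *+ n - n%:R + ln (s ^+ n)) / 2.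
Proof.
move=> uS nz_s; have dS : \det S != 0 by rewrite -unitfE -unitmxE.
rewrite /gaussKL invmxZ ?unitmxZ ?unitfE // -scalemxAl mulVmx //.
by rewrite mxtraceZ mxtrace1 mulr_natr detZ mulfK.
Qed.

Lemma gaussKL_scale_gt0 S s :
  (0 < n)%N -> S \in unitmx -> 0 < s -> s != 1 -> 0 < gaussKL S (s *: S).
Proof.
move=> n_gt0 uS s_gt0 s_neq1; rewrite gaussKL_scale ?gt_eqF // lnXn //.
have -> : s^-1 *+ n - n%:R + ln s *+ n = (s^-1 - 1 + ln s) *+ n.
  by rewrite mulrnDl mulrnBl.
rewrite divr_gt0 // pmulrn_lgt0 //.
by have := ln_gt_1BV s_gt0 s_neq1; lra.
Qed.

Lemma gaussKL_diagAB m Sh a b :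
  (m <= n)%N -> Sh \in unitmx -> a != 0 -> b != 0 ->
  gaussKL (Sh *m Sh) (Sh *m diagAB n m a b *m Sh) =
  (a^-1 *+ m + b^-1 *+ (n - m) - n%:R + ln (a ^+ m * b ^+ (n - m))) / 2.
Proof.
move=> le_mn uSh nz_a nz_b.
have nz_D i : (\row_(j < n) if (j < m)%N then a else b) 0 i != 0.
  by rewrite mxE; case: ifP.
have detD : \det (diagAB n m a b) = a ^+ m * b ^+ (n - m).
  by rewrite det_diag -prodr_ite_lt //; apply: eq_bigr => i _; rewrite mxE.
have uD : diagAB n m a b \in unitmx.
  by rewrite unitmxE detD unitfE mulf_neq0 ?expf_neq0.
have -> : Sh *m Sh = Sh *m 1%:M *m Sh by rewrite mulmx1.
rewrite gaussKL_mulmx ?unitmx1 // gaussKL1_diag // -detD det_diag.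
rewrite (eq_bigr (fun i : 'I_n => if (i < m)%N then a^-1 else b^-1)) ?sumr_ite_lt //.
by move=> i _; rewrite mxE; case: ifP.
Qed.

Lemma gaussKL_diagAB_gt_scale m Sh a b s :
  (0 < m < n)%N -> Sh \in unitmx -> 0 < a -> 0 < b -> a != b -> 0 < s ->
  a ^+ m * b ^+ (n - m) = s ^+ n ->
  gaussKL (Sh *m Sh) (s *: (Sh *m Sh)) <
  gaussKL (Sh *m Sh) (Sh *m diagAB n m a b *m Sh).
Proof.
move=> lt_0mn uSh a_gt0 b_gt0 neq_ab s_gt0 constraint.
have le_mn : (m <= n)%N by case/andP: lt_0mn => _ /ltnW.
rewrite gaussKL_scale ?unitmx_mul ?uSh ?gaussKL_diagAB ?gt_eqF // constraint.
by rewrite ltr_pM2r // ltrD2r ltrD2r ltr_AGM2_inv.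
Qed.

Lemma gaussKL_diagAB_alpha_of_cvgy m Sh s :
  (0 < m < n)%N -> Sh \in unitmx -> 0 < s ->
  gaussKL (Sh *m Sh) (Sh *m diagAB n m (alpha_of n m s b) b *m Sh)
    @[b --> 0^'+] --> +oo.
Proof.
move=> /andP[m_gt0 lt_mn] uSh s_gt0.
pose c := ln (s ^+ n) - n%:R.
apply: (@ger_cvgy _ _ _ _ (fun b => (b^-1 * (n - m)%:R + c) / 2)); last first.
  apply: (@gt0_cvgMly _ _ _ (2^-1)); first by rewrite invr_gt0.
  apply: cvgy_addr; apply: gt0_cvgMly; last exact: invr_cvgy0p.
  by rewrite ltr0n subn_gt0.
near=> b; have b_gt0 : 0 < b by near: b; exact: nbhs_right_gt.
have [al_gt0 constraint] := alpha_ofP n m_gt0 s_gt0 b_gt0.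
rewrite gaussKL_diagAB ?(ltnW lt_mn) ?gt_eqF // constraint mulr_natr /c.
have : 0 <= (alpha_of n m s b)^-1 *+ m by rewrite mulrn_wge0 // invr_ge0 ltW.
lra.
Unshelve. all: by end_near.
Qed.

End GaussianKL.

Theorem propositionD2 (R : realType) (n m : nat) (sigma : R)
    (Sigma Shalf : 'M[R]_n) :
  (2 <= n)%N -> (1 <= m)%N -> (m <= n - 1)%N ->
  0 < sigma -> sigma < 1 ->
  spd Sigma ->
  (* Shalf is the symmetric positive-definite square root of Sigma *)
  spd Shalf -> Shalf *m Shalf = Sigma ->
  (forall alpha beta : R, beta > 0 -> alpha > beta ->
     alpha ^+ m * beta ^+ (n - m) = sigma ^+ n ->
     gaussKL Sigma (Shalf *m diagAB n m alpha beta *m Shalf)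
       >= gaussKL Sigma (sigma *: Sigma)
     /\ (gaussKL Sigma (Shalf *m diagAB n m alpha beta *m Shalf)
           = gaussKL Sigma (sigma *: Sigma)
         <-> alpha = sigma /\ beta = sigma))
  /\
  ((fun beta : R =>
      gaussKL Sigma (Shalf *m diagAB n m (alpha_of n m sigma beta) beta *m Shalf)
      / gaussKL Sigma (sigma *: Sigma))
     @ 0^'+ --> +oo).
Proof.
move=> n_ge2 m_gt0 le_m_n1 s_gt0 s_lt1 _ /spd_unitmx uSh <-.
have lt_0mn : (0 < m < n)%N.
  by rewrite m_gt0 (leq_ltn_trans le_m_n1) // subn1 ltn_predL (ltn_trans _ n_ge2).
have ssl_gt0 : 0 < gaussKL (Shalf *m Shalf) (sigma *: (Shalf *m Shalf)).
  by rewrite gaussKL_scale_gt0 ?unitmx_mul ?uSh ?lt_eqF // (ltn_trans _ n_ge2).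
split=> [a b b_gt0 lt_ba constraint | ].
  have a_gt0 : 0 < a := lt_trans b_gt0 lt_ba.
  have neq_ab : a != b by rewrite gt_eqF.
  have := gaussKL_diagAB_gt_scale lt_0mn uSh a_gt0 b_gt0 neq_ab s_gt0 constraint.
  move=> lt_ssl_sl; split; first exact: ltW.
  split=> [/esym/eqP | [eq_a eq_b]]; first by rewrite lt_eqF.
  by move: lt_ba; rewrite eq_a eq_b ltxx.
apply: gt0_cvgMly; first by rewrite invr_gt0.
exact: gaussKL_diagAB_alpha_of_cvgy.
Qed.
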